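(* Let $N\ge2$, $h=\pi/N$, $x_j=-\cos(jh)$ for $0\le j\le N$ (Chebyshev–Gauss–Lobatto points), and for $1\le j\le N-1$ let $B_j\in\mathbb{P}_N$ be the unique polynomial with $B_j(\pm1)=0$ and $B_j''(x_i)=\delta_{ij}$ for $1\le i\le N-1$. Then $$B_j(x)=\sum_{k=0}^{N-2}\beta_{kj}\Big\{\partial_x^{-2}T_k(x)-\frac{1+x}{2}\,\partial_x^{-2}T_k(1)\Big\},\qquad B_j'(x)=\sum_{k=0}^{N-2}\beta_{kj}\Big\{\partial_x^{-1}T_k(x)-\frac{\partial_x^{-2}T_k(1)}{2}\Big\},$$ where $$\beta_{kj}=\frac{2}{c_kN}\Big\{T_k(x_j)-\frac{1-(-1)^{N+k}}{2}T_{N-1}(x_j)-\frac{1+(-1)^{N+k}}{2}T_N(x_j)\Big\},$$ with $c_0=2$ and $c_k=1$ for $k\ge1$.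
   Context: $T_k(x)=\cos(k\arccos x)$ is the Chebyshev polynomial of degree $k$. $\mathbb{P}_N$ is the space of polynomials of degree at most $N$. $\partial_x^{-1}u(x)=\int_{-1}^x u(t)\,dt$ and $\partial_x^{-2}u=\partial_x^{-1}(\partial_x^{-1}u)$. *)

From Stdlib Require Import Reals Lra Lia ClassicalEpsilon.
Open Scope R_scope.

(* Chebyshev polynomial T_k(x) = cos(k arccos x) (meaningful on [-1,1]). *)
Definition Tcheb (k : nat) (x : R) : R := cos (INR k * acos x).

(* Riemann integral of f over [a,b] (unspecified if f is not Riemann integrable;
   all integrands used below are continuous, hence integrable). *)
Definition Rint (f : R -> R) (a b : R) : R :=
  epsilon (inhabits 0)
    (fun v => exists pr : Riemann_integrable f a b, RiemannInt pr = v).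

Definition Dm1 (u : R -> R) (x : R) : R := Rint u (-1) x.
Definition Dm2 (u : R -> R) (x : R) : R := Dm1 (Dm1 u) x.

Definition in_PN (N : nat) (f : R -> R) : Prop :=
  exists a : nat -> R, forall x, f x = sum_f_R0 (fun i => a i * x ^ i) N.

Definition cgl (N j : nat) : R := - cos (INR j * (PI / INR N)).

Definition ck (k : nat) : R := if Nat.eqb k 0 then 2 else 1.

Definition kron (i j : nat) : R := if Nat.eqb i j then 1 else 0.

Definition beta (N k j : nat) : R :=
  2 / (ck k * INR N) *
  (Tcheb k (cgl N j)
   - (1 - (-1) ^ (N + k)) / 2 * Tcheb (N - 1) (cgl N j)
   - (1 + (-1) ^ (N + k)) / 2 * Tcheb N (cgl N j)).

Definition is_Bj (N j : nat) (B B1 B2 : R -> R) : Prop :=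
  in_PN N B /\
  (forall x, derivable_pt_lim B x (B1 x)) /\
  (forall x, derivable_pt_lim B1 x (B2 x)) /\
  B (-1) = 0 /\ B 1 = 0 /\
  (forall i, (1 <= i <= N - 1)%nat -> B2 (cgl N i) = kron i j).

(* Let P be the polynomial defined by the right-hand side of the
   claimed formula for B_j.  Then P'' = sum_{k<=N-2} beta_kj T_k, so the nodal
   conditions P''(x_i) = delta_ij reduce to the discrete identity
   sum_k beta_kj T_k(x_i) = delta_ij, which follows from the discrete
   orthogonality of k |-> cos(k theta_a) (theta_a = a pi / N) for the
   trapezoidal sum sum''_{k=0}^N.  Conversely, any B in P_N satisfying the conditions equals P,
   since B - P has degree <= N, its second derivative vanishes at the N-1
   interior nodes and B - P vanishes at -1 and 1. *)

From Stdlib Require Import Reals Lra Lia ClassicalEpsilon FunctionalExtensionality.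
From Coquelicot Require Coquelicot.
From mathcomp Require ssreflect ssrfun ssrbool eqtype ssrnat seq fintype bigop ssralg poly Rstruct zify.
Open Scope R_scope.

Definition theta (N m : nat) : R := INR m * (PI / INR N).

Lemma theta_range N m : (0 < N)%nat -> (m <= N)%nat -> 0 <= theta N m <= PI.
Proof.
  intros hN hm.
  assert (HN : 0 < INR N) by (apply lt_0_INR; lia).
  assert (Hstep : 0 < PI / INR N) by (apply Rdiv_lt_0_compat; [apply PI_RGT_0 | lra]).
  assert (Hm : 0 <= INR m <= INR N) by (split; [apply pos_INR | apply le_INR; lia]).
  unfold theta; split.
  - apply Rmult_le_pos; lra.
  - replace PI with (INR N * (PI / INR N)) at 2 by (field; lra).
    apply Rmult_le_compat_r; lra.
Qed.

Lemma sin_shift_pi (r : nat) y : sin (y + INR r * PI) = (-1) ^ r * sin y.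
Proof.
  induction r as [|r IH].
  - simpl. rewrite Rmult_0_l, Rplus_0_r; ring.
  - rewrite S_INR; simpl pow.
    replace (y + (INR r + 1) * PI) with ((y + INR r * PI) + PI) by ring.
    rewrite neg_sin, IH; ring.
Qed.

Lemma cos_shift_pi (r : nat) y : cos (y + INR r * PI) = (-1) ^ r * cos y.
Proof.
  induction r as [|r IH].
  - simpl. rewrite Rmult_0_l, Rplus_0_r; ring.
  - rewrite S_INR; simpl pow.
    replace (y + (INR r + 1) * PI) with ((y + INR r * PI) + PI) by ring.
    rewrite neg_cos, IH; ring.
Qed.

Lemma sum_cos_telescope (a : R) (n : nat) :
  sum_f_R0 (fun k => cos (INR k * a)) n * (2 * sin (a / 2))
  = sin (INR n * a + a / 2) + sin (a / 2).
Proof.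
  induction n as [|n IH].
  - simpl. rewrite Rmult_0_l, cos_0, Rplus_0_l. ring.
  - rewrite tech5, Rmult_plus_distr_r, IH, S_INR.
    replace (INR n * a + a / 2) with ((INR n + 1) * a - a / 2) by field.
    rewrite sin_minus, sin_plus. ring.
Qed.

(* The trapezoidal sum  sum''_{k=0}^N f(k)  whose end terms carry weight 1/2:
   the discrete inner product for which Chebyshev polynomials are orthogonal
   on the CGL grid. *)
Definition tsum (N : nat) (f : nat -> R) : R := sum_f_R0 f N - f 0%nat / 2 - f N / 2.

Lemma tsum_ext N f g : (forall k, (k <= N)%nat -> f k = g k) -> tsum N f = tsum N g.
Proof.
  intros H. unfold tsum. rewrite (sum_eq f g N) by auto.
  rewrite (H 0%nat), (H N) by lia. reflexivity.
Qed.

Lemma tsum_lin N f g h c1 c2 :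
  tsum N (fun k => f k + c1 * g k + c2 * h k) = tsum N f + c1 * tsum N g + c2 * tsum N h.
Proof.
  unfold tsum.
  rewrite (sum_plus (fun k => f k + c1 * g k) (fun k => c2 * h k)), (sum_plus f (fun k => c1 * g k)).
  rewrite (sum_eq (fun k => c1 * g k) (fun k => g k * c1)) by (intros; ring).
  rewrite (sum_eq (fun k => c2 * h k) (fun k => h k * c2)) by (intros; ring).
  rewrite <- !scal_sum. field.
Qed.

Lemma tsum_const N c : tsum N (fun _ => c) = c * INR N.
Proof. unfold tsum. rewrite sum_cte, S_INR. field. Qed.

Lemma tsum_cos (N r : nat) : (0 < N)%nat -> (1 <= r <= 2 * N - 1)%nat ->
  tsum N (fun k => cos (INR k * theta N r)) = 0.
Proof.
  intros hN hr.
  assert (HN : 0 < INR N) by (apply lt_0_INR; lia).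
  assert (Hr : 1 <= INR r <= 2 * INR N - 1).
  { split; [apply (le_INR 1); lia |].
    replace (2 * INR N - 1) with (INR (2 * N - 1)) by (rewrite minus_INR, mult_INR by lia; simpl; ring).
    apply le_INR; lia. }
  set (a := theta N r).
  assert (Hsin : 0 < sin (a / 2)).
  { assert (HP : 0 < PI) by apply PI_RGT_0.
    assert (Ha : a / 2 = PI * (INR r / (2 * INR N))) by (unfold a, theta; field; lra).
    assert (Hq : 0 < INR r / (2 * INR N) < 1).
    { split; [apply Rdiv_lt_0_compat; lra |].
      apply (Rmult_lt_reg_r (2 * INR N)); [lra |]. unfold Rdiv.
      rewrite Rmult_assoc, Rinv_l by lra. lra. }
    apply sin_gt_0; rewrite Ha; nra. }
  assert (HNa : INR N * a = INR r * PI) by (unfold a, theta; field; lra).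
  pose proof (sum_cos_telescope a N) as T.
  rewrite HNa, (Rplus_comm _ (a / 2)), sin_shift_pi in T.
  unfold tsum. rewrite HNa, Rmult_0_l, cos_0, <- (Rplus_0_l (INR r * PI)), cos_shift_pi, cos_0.
  apply Rmult_eq_reg_r with (2 * sin (a / 2)); [| lra].
  rewrite Rmult_0_l, !Rmult_minus_distr_r, T. field.
Qed.

(* The same sum with alternating signs: (-1)^k cos(k theta_a) = cos(k theta_{a+N}). *)
Lemma tsum_alt_cos (N a : nat) : (0 < N)%nat -> (1 <= a <= N - 1)%nat ->
  tsum N (fun k => (-1) ^ k * cos (INR k * theta N a)) = 0.
Proof.
  intros hN ha.
  assert (HN : 0 < INR N) by (apply lt_0_INR; lia).
  rewrite <- (tsum_cos N (a + N)) by lia.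
  apply tsum_ext. intros k _.
  replace (INR k * theta N (a + N)) with (INR k * theta N a + INR k * PI).
  - rewrite cos_shift_pi. ring.
  - unfold theta. rewrite plus_INR. field. lra.
Qed.

Lemma tsum_cos_cos (N a b : nat) : (0 < N)%nat -> (1 <= a <= N - 1)%nat -> (1 <= b <= N - 1)%nat ->
  tsum N (fun k => cos (INR k * theta N b) * cos (INR k * theta N a))
  = if Nat.eqb a b then INR N / 2 else 0.
Proof.
  intros hN ha hb.
  assert (HN : 0 < INR N) by (apply lt_0_INR; lia).
  assert (Hprod : forall k, cos (INR k * theta N b) * cos (INR k * theta N a)
    = 0 + / 2 * cos (INR k * theta N (a + b))
        + / 2 * cos (INR k * (INR b - INR a) * (PI / INR N))).
  { intros k. unfold theta. rewrite plus_INR.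
    replace (INR k * (INR b - INR a) * (PI / INR N))
      with (INR k * (INR b * (PI / INR N)) - INR k * (INR a * (PI / INR N))) by ring.
    replace (INR k * ((INR a + INR b) * (PI / INR N)))
      with (INR k * (INR b * (PI / INR N)) + INR k * (INR a * (PI / INR N))) by ring.
    rewrite cos_plus, cos_minus. field. }
  rewrite (tsum_ext N _ _ (fun k _ => Hprod k)), tsum_lin, tsum_const.
  rewrite (tsum_cos N (a + b)) by lia.
  destruct (Nat.lt_total a b) as [H | [H | H]].
  - replace (Nat.eqb a b) with false by (symmetry; apply Nat.eqb_neq; lia).
    rewrite (tsum_ext N _ (fun k => cos (INR k * theta N (b - a)))).
    + rewrite tsum_cos by lia. ring.
    + intros k _. unfold theta. rewrite minus_INR by lia. f_equal. ring.
  - subst b. rewrite Nat.eqb_refl.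
    rewrite (tsum_ext N _ (fun _ => 1)).
    + rewrite tsum_const. field.
    + intros k _. rewrite Rminus_diag, Rmult_0_r, Rmult_0_l. apply cos_0.
  - replace (Nat.eqb a b) with false by (symmetry; apply Nat.eqb_neq; lia).
    rewrite (tsum_ext N _ (fun k => cos (INR k * theta N (a - b)))).
    + rewrite tsum_cos by lia. ring.
    + intros k _. unfold theta. rewrite minus_INR by lia. rewrite <- cos_neg. f_equal. ring.
Qed.

Lemma Tcheb_0 x : Tcheb 0 x = 1.
Proof. unfold Tcheb. simpl. rewrite Rmult_0_l. apply cos_0. Qed.

Lemma Tcheb_1 x : -1 <= x <= 1 -> Tcheb 1 x = x.
Proof. intros hx. unfold Tcheb. simpl. rewrite Rmult_1_l. apply cos_acos; exact hx. Qed.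

Lemma Tcheb_rec k x : -1 <= x <= 1 ->
  Tcheb (S (S k)) x = 2 * x * Tcheb (S k) x - Tcheb k x.
Proof.
  intros hx. unfold Tcheb. set (t := acos x).
  replace (INR (S (S k)) * t) with (INR (S k) * t + t) by (rewrite !S_INR; ring).
  replace (INR k * t) with (INR (S k) * t - t) by (rewrite !S_INR; ring).
  rewrite cos_plus, cos_minus. unfold t. rewrite (cos_acos x hx). ring.
Qed.

Lemma cgl_range N i : -1 <= cgl N i <= 1.
Proof. unfold cgl. pose proof (COS_bound (INR i * (PI / INR N))). lra. Qed.

Lemma Tcheb_cgl N i k : (0 < N)%nat -> (i <= N)%nat ->
  Tcheb k (cgl N i) = cos (INR k * theta N (N - i)).
Proof.
  intros hN hi. assert (HN : 0 < INR N) by (apply lt_0_INR; lia).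
  unfold Tcheb, cgl.
  replace (- cos (INR i * (PI / INR N))) with (cos (theta N (N - i))).
  - rewrite acos_cos; [reflexivity | apply theta_range; lia].
  - unfold theta. rewrite minus_INR by lia.
    replace ((INR N - INR i) * (PI / INR N)) with (PI - INR i * (PI / INR N)) by (field; lra).
    apply Rtrigo_facts.cos_pi_minus.
Qed.

Lemma cgl_injective N i i' : (0 < N)%nat -> (i <= N)%nat -> (i' <= N)%nat ->
  cgl N i = cgl N i' -> i = i'.
Proof.
  intros hN hi hi' E. unfold cgl in E.
  assert (HN : 0 < INR N) by (apply lt_0_INR; lia).
  assert (Hstep : 0 < PI / INR N) by (apply Rdiv_lt_0_compat; [apply PI_RGT_0 | lra]).
  assert (E2 : theta N i = theta N i').
  { apply cos_inj; try (apply theta_range; lia). unfold theta. lra. }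
  unfold theta in E2. apply INR_eq, (Rmult_eq_reg_r (PI / INR N)); lra.
Qed.

Definition beta_num (N k j : nat) : R :=
  Tcheb k (cgl N j)
  - (1 - (-1) ^ (N + k)) / 2 * Tcheb (N - 1) (cgl N j)
  - (1 + (-1) ^ (N + k)) / 2 * Tcheb N (cgl N j).

Lemma beta_num_top N j : (1 <= N)%nat ->
  beta_num N (N - 1) j = 0 /\ beta_num N N j = 0.
Proof.
  intros hN. unfold beta_num. split.
  - replace (N + (N - 1))%nat with (S (2 * (N - 1))) by lia.
    rewrite pow_1_odd. field.
  - replace (N + N)%nat with (2 * N)%nat by lia.
    rewrite pow_1_even. field.
Qed.

Lemma tsum_beta_num N i j : (2 <= N)%nat -> (1 <= i <= N - 1)%nat -> (1 <= j <= N - 1)%nat ->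
  tsum N (fun k => beta_num N k j * Tcheb k (cgl N i)) = INR N / 2 * kron i j.
Proof.
  intros hN hi hj.
  set (a := (N - i)%nat). set (b := (N - j)%nat).
  set (C1 := cos (INR (N - 1) * theta N b)). set (C2 := cos (INR N * theta N b)).
  rewrite (tsum_ext N _ (fun k => cos (INR k * theta N b) * cos (INR k * theta N a)
             + (- (C1 + C2) / 2) * cos (INR k * theta N a)
             + ((-1) ^ N * (C1 - C2) / 2) * ((-1) ^ k * cos (INR k * theta N a)))).
  - rewrite tsum_lin, tsum_cos_cos, tsum_cos, tsum_alt_cos by lia.
    unfold kron.
    destruct (Nat.eqb_spec a b) as [Eab | Eab]; destruct (Nat.eqb_spec i j) as [Eij | Eij];
      unfold a, b in Eab; try lia; ring.
  - intros k _. unfold beta_num. rewrite !Tcheb_cgl by lia. fold a b C1 C2.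
    rewrite pow_add. field.
Qed.

Lemma sum_div_ck (f : nat -> R) M :
  sum_f_R0 (fun k => f k / ck k) M = sum_f_R0 f M - f 0%nat / 2.
Proof.
  induction M as [|M IH].
  - simpl. unfold ck. simpl. field.
  - rewrite !tech5, IH. unfold ck. simpl. field.
Qed.

Lemma tsum_truncate N f : (2 <= N)%nat -> f (N - 1)%nat = 0 -> f N = 0 ->
  tsum N f = sum_f_R0 f (N - 2) - f 0%nat / 2.
Proof.
  intros hN h1 h2. unfold tsum.
  replace N with (S (S (N - 2))) at 1 by lia. rewrite !tech5.
  replace (S (N - 2)) with (N - 1)%nat by lia. replace (S (N - 1)) with N by lia.
  rewrite h1, h2. field.
Qed.

Lemma beta_nodal N i j : (2 <= N)%nat -> (1 <= i <= N - 1)%nat -> (1 <= j <= N - 1)%nat ->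
  sum_f_R0 (fun k => beta N k j * Tcheb k (cgl N i)) (N - 2) = kron i j.
Proof.
  intros hN hi hj.
  assert (HN : 0 < INR N) by (apply lt_0_INR; lia).
  set (g := fun k => beta_num N k j * Tcheb k (cgl N i)).
  rewrite (sum_eq _ (fun k => g k / ck k * (2 / INR N))).
  - destruct (beta_num_top N j ltac:(lia)) as [Htop1 Htop2].
    rewrite <- scal_sum, sum_div_ck, <- tsum_truncate.
    + unfold g. rewrite tsum_beta_num by lia. field. lra.
    + lia.
    + unfold g. rewrite Htop1. ring.
    + unfold g. rewrite Htop2. ring.
  - intros k _. unfold g, beta. fold (beta_num N k j).
    assert (ck k <> 0) by (unfold ck; destruct (Nat.eqb k 0); lra).
    field. split; lra.
Qed.

Module NewtonLeibniz.
Import Coquelicot.Coquelicot.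

Lemma Rint_primitive (f g F : R -> R) a b : a <= b ->
  (forall t, derivable_pt_lim F t (g t)) -> (forall t, continuity_pt g t) ->
  (forall t, a <= t <= b -> f t = g t) -> Rint f a b = F b - F a.
Proof.
  intros hab hF hg hfg.
  assert (H : is_RInt f a b (F b - F a)).
  { apply is_RInt_ext with g.
    - intros t Ht. rewrite Rmin_left, Rmax_right in Ht by lra. symmetry; apply hfg; lra.
    - apply (is_RInt_derive F g).
      + intros t _. apply is_derive_Reals; auto.
      + intros t _. apply continuity_pt_filterlim; auto. }
  assert (pr : Riemann_integrable f a b) by (apply ex_RInt_Reals_0; exists (F b - F a); exact H).
  unfold Rint.
  destruct (epsilon_spec (inhabits 0) (fun v => exists pr, RiemannInt pr = v)
             (ex_intro _ _ (ex_intro _ pr eq_refl))) as [pr' E].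
  rewrite <- E, <- RInt_Reals.
  apply is_RInt_unique; exact H.
Qed.

End NewtonLeibniz.

Module PolynomialModel.
Import ssreflect ssrfun ssrbool eqtype ssrnat seq fintype bigop ssralg poly Rstruct zify.
Import GRing.Theory.
Local Open Scope ring_scope.

Lemma horner_derivable (p : {poly R}) x :
  derivable_pt_lim (fun y => p.[y]) x p^`().[x].
Proof.
elim/poly_ind: p x => [|p c IH] x.
  rewrite deriv0 horner0.
  have -> : (fun y => (0 : {poly R}).[y]) = fun _ => 0.
    by apply: functional_extensionality => y; rewrite horner0.
  exact: derivable_pt_lim_const.
have -> : (fun y => (p * 'X + c%:P).[y]) = (fun y => Rplus (Rmult p.[y] y) c).
  by apply: functional_extensionality => y; rewrite hornerMXaddC.
rewrite derivMXaddC hornerD hornerMX.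
have -> : p.[x] + p^`().[x] * x = Rplus (Rplus (Rmult (p^`().[x]) x) (Rmult p.[x] 1)) 0.
  by rewrite !RplusE !RmultE addr0 mulr1 addrC.
apply: (derivable_pt_lim_plus (fun y => Rmult p.[y] y) (fun _ => c));
  last exact: derivable_pt_lim_const.
apply: (derivable_pt_lim_mult (fun y => p.[y]) (fun y => y)) => //.
exact: derivable_pt_lim_id.
Qed.

Lemma horner_continuous (p : {poly R}) x : continuity_pt (fun y => p.[y]) x.
Proof. exact: (derivable_continuous_pt _ _ (exist _ _ (horner_derivable p x))). Qed.

Lemma in_PN_horner N (p : {poly R}) : (size p <= N.+1)%N -> in_PN N (fun x => p.[x]).
Proof.
move=> hp; exists (fun i => p`_i) => x.
by rewrite sum_f_R0E big_mkord (horner_coef_wide _ hp); apply: eq_bigr => i _; rewrite RpowE.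
Qed.

Lemma in_PN_poly N f : in_PN N f ->
  exists2 p : {poly R}, (size p <= N.+1)%N & f = fun x => p.[x].
Proof.
case=> a ha; exists (\poly_(i < N.+1) a i); first exact: size_poly.
apply: functional_extensionality => x.
by rewrite ha horner_poly sum_f_R0E big_mkord; apply: eq_bigr => i _; rewrite RpowE.
Qed.

Fixpoint cheb (k : nat) : {poly R} :=
  match k with
  | 0 => 1
  | 1 => 'X
  | (k1.+1 as k2).+1 => (2%:R *: 'X) * cheb k2 - cheb k1
  end.

Lemma cheb_rec k : cheb k.+2 = (2%:R *: 'X) * cheb k.+1 - cheb k.
Proof. by []. Qed.

Lemma size_cheb k : (size (cheb k) <= k.+1)%N.
Proof.
elim/ltn_ind: k => -[|[|k]] IH; rewrite ?size_poly1 ?size_polyX // cheb_rec.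
apply: leq_trans (size_polyD _ _) _; rewrite size_polyN geq_max; apply/andP; split.
- apply: leq_trans (size_polyMleq _ _) _.
  set sX := size _; set sC := size _.
  have : (sX <= 2)%N by apply: leq_trans (size_scale_leq _ _) _; rewrite size_polyX.
  have : (sC <= k.+2)%N by exact: IH.
  lia.
- exact: leq_trans (IH k (leqW (ltnSn k))) (leqW (leqnSn _)).
Qed.

Lemma Tcheb_horner k x : -1 <= x <= 1 -> Tcheb k x = (cheb k).[x].
Proof.
move=> hx.
suff [] : Tcheb k x = (cheb k).[x] /\ Tcheb k.+1 x = (cheb k.+1).[x] by [].
elim: k => [|k [IH1 IH2]]; first by rewrite hornerC hornerX Tcheb_0 Tcheb_1.
by split=> //; rewrite Tcheb_rec // IH1 IH2 cheb_rec hornerD hornerN hornerM hornerZ hornerX.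
Qed.

Definition integ (p : {poly R}) : {poly R} :=
  \poly_(i < (size p).+1) (if i is i'.+1 then p`_i' / i'.+1%:R else 0).

Lemma natr_eq0 n : (n%:R == 0 :> R) = (n == 0)%N.
Proof. by apply/eqP/eqP => [|-> //]; rewrite -INRE => h; apply: INR_eq. Qed.

Lemma integ_deriv p : (integ p)^`() = p.
Proof.
apply/polyP => i; rewrite coef_deriv coef_poly ltnS.
case: ltnP => hi; first by rewrite -[_ *+ _]mulr_natr divfK // natr_eq0.
by rewrite mul0rn nth_default.
Qed.

(* The antiderivative of p vanishing at -1, i.e. the polynomial model of the
   operator u |-> int_{-1}^x u. *)
Definition prim (p : {poly R}) : {poly R} := integ p - (integ p).[-1]%:P.

Lemma prim_deriv p : (prim p)^`() = p.
Proof. by rewrite /prim derivB derivC subr0 integ_deriv. Qed.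

Lemma prim_at_m1 p : (prim p).[-1] = 0.
Proof. by rewrite /prim hornerD hornerN hornerC subrr. Qed.

Lemma size_prim p : (size (prim p) <= (size p).+1)%N.
Proof.
apply: leq_trans (size_polyD _ _) _; rewrite geq_max size_poly size_polyN /=.
exact: leq_trans (size_polyC_leq1 _) _.
Qed.

Lemma Dm1_prim (f : R -> R) (p : {poly R}) x : Rle (-1) x ->
  (forall t, Rle (-1) t /\ Rle t x -> f t = p.[t]) -> Dm1 f x = (prim p).[x].
Proof.
move=> hx hf; rewrite /Dm1.
rewrite (NewtonLeibniz.Rint_primitive f (fun t => p.[t]) (fun t => (prim p).[t])) //.
- by rewrite prim_at_m1 Rminus_0_r.
- by move=> t; rewrite -{2}(prim_deriv p); exact: horner_derivable.
- by move=> t; exact: horner_continuous.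
Qed.

Definition cheb_i1 k := prim (cheb k).
Definition cheb_i2 k := prim (cheb_i1 k).

Lemma cheb_i1_deriv k : (cheb_i1 k)^`() = cheb k.
Proof. exact: prim_deriv. Qed.

Lemma cheb_i2_deriv k : (cheb_i2 k)^`() = cheb_i1 k.
Proof. exact: prim_deriv. Qed.

Lemma size_cheb_i2 k : (size (cheb_i2 k) <= k.+3)%N.
Proof.
apply: leq_trans (size_prim _) _; apply: leq_trans (size_prim _) _.
exact: size_cheb.
Qed.

Lemma Dm1_Tcheb k x : -1 <= x <= 1 -> Dm1 (Tcheb k) x = (cheb_i1 k).[x].
Proof.
move=> hx; apply: Dm1_prim; first by case: hx.
move=> t ht; apply: Tcheb_horner; case: ht hx => *; split; lra.
Qed.

Lemma Dm2_Tcheb k x : -1 <= x <= 1 -> Dm2 (Tcheb k) x = (cheb_i2 k).[x].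
Proof.
move=> hx; apply: Dm1_prim; first by case: hx.
move=> t ht; apply: Dm1_Tcheb; case: ht hx => *; split; lra.
Qed.

Lemma size_deriv2 {p : {poly R}} {n} : (size p <= n.+2)%N -> (size p^`()^`() <= n)%N.
Proof.
move=> hp; apply/leq_sizeP => m hm.
by rewrite !coef_deriv nth_default ?mul0rn //; apply: leq_trans hp _.
Qed.

Lemma poly_eq0_from_nodes (p : {poly R}) (s : seq R) a b :
  (size p <= (size s).+2)%N -> uniq s -> all (root p^`()^`()) s ->
  a != b -> root p a -> root p b -> p = 0.
Proof.
move=> hp us hs ab pa pb.
have p2 : p^`()^`() = 0.
  exact: roots_geq_poly_eq0 hs us (size_deriv2 hp).
have hp2 : (size p <= 2)%N.
  apply/leq_sizeP => -[|[|m]] // _; move/polyP: p2 => /(_ m).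
  rewrite !coef_deriv coef0 -mulrnA -mulr_natr => /eqP.
  by rewrite mulf_eq0 natr_eq0 muln_eq0 orbF => /eqP.
apply: (@roots_geq_poly_eq0 _ p [:: a; b]) => //=.
- by rewrite pa pb.
- by rewrite inE ab.
Qed.

(* q minus the multiple of 1 + X that makes it vanish at 1; the value at -1
   is unchanged, and the second derivative too. *)
Definition zero_at_1 (q : {poly R}) : {poly R} := q - (q.[1] / 2) *: (1 + 'X).

Lemma horner_zero_at_1 (q : {poly R}) x : (zero_at_1 q).[x] = q.[x] - q.[1] / 2 * (1 + x).
Proof. by rewrite /zero_at_1 !hornerE. Qed.

Lemma zero_at_1_ends (q : {poly R}) : (zero_at_1 q).[-1] = q.[-1] /\ (zero_at_1 q).[1] = 0.
Proof.
rewrite !horner_zero_at_1 addrN mulr0 subr0; split=> //.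
by rewrite (_ : 1 + 1 = 2%:R) // divfK ?natr_eq0 // subrr.
Qed.

Lemma deriv_zero_at_1 (q : {poly R}) : (zero_at_1 q)^`() = q^`() - (q.[1] / 2)%:P.
Proof. by rewrite /zero_at_1 derivB derivZ derivD -polyC1 derivC derivX add0r alg_polyC. Qed.

Lemma size_zero_at_1 (q : {poly R}) n : (2 <= n)%N -> (size q <= n)%N -> (size (zero_at_1 q) <= n)%N.
Proof.
move=> hn hq; apply: leq_trans (size_polyD _ _) _; rewrite geq_max size_polyN hq /=.
apply: leq_trans (size_scale_leq _ _) _; apply: leq_trans (size_polyD _ _) _.
by rewrite geq_max size_poly1 size_polyX; apply/andP; split; lia.
Qed.

Section CardinalFunction.
Variables N j : nat.

Definition Bpoly : {poly R} := \sum_(k < (N - 2).+1) beta N k j *: zero_at_1 (cheb_i2 k).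

(* Derivatives of Bpoly; the corrections are affine, so Bpoly'' = sum_k beta_kj T_k. *)
Lemma Bpoly_deriv : Bpoly^`() =
  \sum_(k < (N - 2).+1) beta N k j *: (cheb_i1 k - ((cheb_i2 k).[1] / 2)%:P).
Proof.
rewrite /Bpoly (big_morph _ (@derivD R) (deriv0 R)); apply: eq_bigr => k _.
by rewrite derivZ deriv_zero_at_1 cheb_i2_deriv.
Qed.

Lemma Bpoly_deriv2 : Bpoly^`()^`() = \sum_(k < (N - 2).+1) beta N k j *: cheb k.
Proof.
rewrite Bpoly_deriv (big_morph _ (@derivD R) (deriv0 R)); apply: eq_bigr => k _.
by rewrite derivZ (derivB (cheb_i1 k)) derivC subr0 cheb_i1_deriv.
Qed.

Lemma Bpoly_at_ends : Bpoly.[-1] = 0 /\ Bpoly.[1] = 0.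
Proof.
rewrite /Bpoly !horner_sum; split; apply: big1 => k _; rewrite hornerZ.
- by rewrite (proj1 (zero_at_1_ends _)) prim_at_m1 mulr0.
- by rewrite (proj2 (zero_at_1_ends _)) mulr0.
Qed.

(* Bpoly lies in P_N since the k-th term has degree k + 2 <= N. *)
Lemma size_Bpoly : (2 <= N)%N -> (size Bpoly <= N.+1)%N.
Proof.
move=> hN; rewrite /Bpoly; elim/big_ind: _ => [|p q hp hq|k _].
- by rewrite size_poly0.
- by apply: leq_trans (size_polyD _ _) _; rewrite geq_max hp hq.
apply: leq_trans (size_scale_leq _ _) _; apply: size_zero_at_1; first exact: leqW.
by apply: leq_trans (size_cheb_i2 k) _; have := ltn_ord k; lia.
Qed.

Lemma Bpoly_nodes (i : nat) : (2 <= N)%coq_nat -> (1 <= i)%coq_nat /\ (i <= N - 1)%coq_nat ->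
  (1 <= j)%coq_nat /\ (j <= N - 1)%coq_nat -> Bpoly^`()^`().[cgl N i] = kron i j.
Proof.
move=> hN hi hj; rewrite Bpoly_deriv2 horner_sum -(beta_nodal N i j) //.
rewrite sum_f_R0E big_mkord; apply: eq_bigr => k _.
by rewrite hornerZ -Tcheb_horner //; exact: cgl_range.
Qed.

Lemma Bpoly_formula x : -1 <= x <= 1 ->
  Bpoly.[x] = sum_f_R0 (fun k => beta N k j *
                (Dm2 (Tcheb k) x - (1 + x) / 2 * Dm2 (Tcheb k) 1)) (N - 2) /\
  Bpoly^`().[x] = sum_f_R0 (fun k => beta N k j *
                (Dm1 (Tcheb k) x - Dm2 (Tcheb k) 1 / 2)) (N - 2).
Proof.
move=> hx; have h1 : -1 <= 1 <= 1 by split; lra.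
rewrite Bpoly_deriv /Bpoly !horner_sum !sum_f_R0E !big_mkord.
split; apply: eq_bigr => k _.
- rewrite !Dm2_Tcheb // hornerZ horner_zero_at_1.
  by congr (_ * (_ - _)); rewrite mulrC mulrA mulrAC.
- by rewrite Dm1_Tcheb // Dm2_Tcheb // hornerZ hornerD hornerN hornerC.
Qed.

Lemma Bpoly_is_Bj : (2 <= N)%coq_nat -> (1 <= j)%coq_nat /\ (j <= N - 1)%coq_nat ->
  is_Bj N j (fun x => Bpoly.[x]) (fun x => Bpoly^`().[x]) (fun x => Bpoly^`()^`().[x]).
Proof.
move=> hN hj; have [Bm Bp] := Bpoly_at_ends.
split; first by apply: in_PN_horner; apply: size_Bpoly; lia.
do 2 (split; first by move=> x; exact: horner_derivable).
by do 2 (split=> //); move=> i hi; exact: Bpoly_nodes hN hi hj.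
Qed.

Lemma is_Bj_Bpoly B B1 B2 : (2 <= N)%coq_nat -> (1 <= j)%coq_nat /\ (j <= N - 1)%coq_nat ->
  is_Bj N j B B1 B2 -> B = (fun x => Bpoly.[x]) /\ B1 = (fun x => Bpoly^`().[x]).
Proof.
move=> hN hj [/in_PN_poly [p hp EB] [dB [dB1 [Bm [Bp Hn]]]]].
have E1 : B1 = fun x => p^`().[x].
  apply: functional_extensionality => x; apply: (uniqueness_limite B x); first exact: dB.
  by rewrite EB; exact: horner_derivable.
have E2 : B2 = fun x => p^`()^`().[x].
  apply: functional_extensionality => x; apply: (uniqueness_limite B1 x); first exact: dB1.
  by rewrite E1; exact: horner_derivable.
rewrite EB /= in Bm Bp; rewrite E2 /= in Hn; rewrite EB E1.
suff -> : p = Bpoly by [].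
have [Bm' Bp'] := Bpoly_at_ends.
apply/eqP; rewrite -subr_eq0; apply/eqP.
apply: (poly_eq0_from_nodes _ [seq cgl N i | i <- iota 1 N.-1] (-1) 1).
- rewrite size_map size_iota prednK; last by apply/leP; lia.
  apply: leq_trans (size_polyD _ _) _.
  by rewrite geq_max size_polyN hp size_Bpoly //; apply/leP.
- rewrite map_inj_in_uniq ?iota_uniq // => a b; rewrite !mem_iota => ha hb.
  by apply: cgl_injective; lia.
- apply/allP => y /mapP [i]; rewrite mem_iota => hi ->.
  have hi' : (1 <= i)%coq_nat /\ (i <= N - 1)%coq_nat by lia.
  rewrite /root (derivB p Bpoly) (derivB p^`() Bpoly^`()) (hornerD p^`()^`()) hornerN.
  by rewrite Bpoly_nodes // Hn // subrr.
- by apply/eqP; change (IZR (-1) <> IZR 1); discrR.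
- by rewrite /root (hornerD p) hornerN Bm Bm' subrr.
- by rewrite /root (hornerD p) hornerN Bp Bp' subrr.
Qed.

End CardinalFunction.

End PolynomialModel.

Theorem proposition3p4 (N j : nat) (hN : (2 <= N)%nat) (hj : (1 <= j <= N - 1)%nat) :
  (exists B B1 B2 : R -> R, is_Bj N j B B1 B2) /\
  (forall B B1 B2 : R -> R, is_Bj N j B B1 B2 ->
     forall x, -1 <= x <= 1 ->
       B x = sum_f_R0 (fun k => beta N k j *
               (Dm2 (Tcheb k) x - (1 + x) / 2 * Dm2 (Tcheb k) 1)) (N - 2)
       /\
       B1 x = sum_f_R0 (fun k => beta N k j *
               (Dm1 (Tcheb k) x - Dm2 (Tcheb k) 1 / 2)) (N - 2)).
Proof.
  split.
  -
    do 3 eexists. exact (PolynomialModel.Bpoly_is_Bj N j hN hj).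
  -
    intros B B1 B2 HB x hx.
    destruct (PolynomialModel.is_Bj_Bpoly N j B B1 B2 hN hj HB) as [-> ->].
    exact (PolynomialModel.Bpoly_formula N j x hx).
Qed.
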